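(* Consider the periodic one-dimensional finite-volume scheme defined in the context, with arbitrary real interface desired velocities $\mathbf{U}^n_i$, and assume that at every time step $n$ the CFL condition $\delta t<\frac12\,\frac{\delta x}{\max_i|\mathbf{U}^n_i|+\max_i|\mathbf{w}^n_i|}$ holds. If $0\le\rho^0_i\le1$ for all $i=1,\dots,N_x$, then $0\le\rho^n_i\le1$ for all $i$ and all $n\ge0$.
   Context: Grid: cells $i=1,\dots,N_x$ of width $\delta x$, indices taken modulo $N_x$ (periodic). Upwind flux: $A^{up}(u,\rho^-,\rho^+)=u\rho^-$ if $u>0$, $=u\rho^+$ if $u\le 0$. Given $\rho^n_i$ and interface velocities $\mathbf{U}^n_i$ (at interface $x_{i-1/2}$), the pressure $(p^n_i)$ is any periodic solution of $\frac{p^n_{i+1}-2p^n_i+p^n_{i-1}}{\delta x^2}=\frac1{\delta x}\big(A^{up}(\mathbf{U}^n_{i+1},\rho^n_i,\rho^n_{i+1})-A^{up}(\mathbf{U}^n_i,\rho^n_{i-1},\rho^n_i)\big)$, the correction velocity is $\mathbf{w}^n_i=-\frac{p^n_i-p^n_{i-1}}{\delta x}$, and the update is $\rho^{n+1}_i=\rho^n_i-\frac{\delta t}{\delta x}\big(A^{up}(\mathbf{U}^n_{i+1},\rho^n_i,\rho^n_{i+1})-A^{up}(\mathbf{U}^n_i,\rho^n_{i-1},\rho^n_i)\big)-\frac{\delta t}{\delta x}\big(A^{up}(\mathbf{w}^n_{i+1},\rho^n_i,\rho^n_{i+1})-A^{up}(\mathbf{w}^n_i,\rho^n_{i-1},\rho^n_i)\big)$.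 *)

From Stdlib Require Import Reals ZArith List.
Open Scope R_scope.

Definition Aup (u rm rp : R) : R := if Rlt_dec 0 u then u * rm else u * rp.

Definition periodic (N : nat) (f : Z -> R) : Prop :=
  forall i : Z, f (i + Z.of_nat N)%Z = f i.

Definition maxabs (N : nat) (f : Z -> R) : R :=
  fold_right Rmax 0 (map (fun k => Rabs (f (Z.of_nat k))) (seq 0 N)).

(* Correction velocity w_i = -(p_i - p_{i-1}) / dx, at interface x_{i-1/2}. *)
Definition wcorr (dx : R) (p : Z -> R) (i : Z) : R :=
  - ((p i - p (i - 1)%Z) / dx).

Definition fluxdiff (v rho : Z -> R) (i : Z) : R :=
  Aup (v (i + 1)%Z) (rho i) (rho (i + 1)%Z) - Aup (v i) (rho (i - 1)%Z) (rho i).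

(* The scheme is a monotone upwind step for rho, so under the CFL condition rho^(n+1)_i is a
   convex combination of neighbouring values of rho^n, which gives rho >= 0.  For rho <= 1, the
   Poisson equation says that the U-flux divergence equals minus the divergence of w, which is
   the w-flux divergence of the constant state 1; hence 1 - rho is transported by the upwind
   scheme with velocity w alone, and the same monotonicity argument gives 1 - rho >= 0. *)
From Stdlib Require Import Reals ZArith List Lra Lia.
Open Scope R_scope.

Lemma Aup_Rmax_Rmin (u x y : R) : Aup u x y = Rmax u 0 * x + Rmin u 0 * y.
Proof.
  unfold Aup; destruct (Rlt_dec 0 u).
  - rewrite Rmax_left, Rmin_right by lra; ring.
  - rewrite Rmax_right, Rmin_left by lra; ring.
Qed.

Lemma Rmax_Rmin_0_bounds (u M : R) :
  Rabs u <= M -> (0 <= Rmax u 0 <= M) /\ (- M <= Rmin u 0 <= 0).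
Proof.
  intros Hu; pose proof (Rle_abs u); pose proof (Rle_abs (- u)); rewrite Rabs_Ropp in *.
  unfold Rmax, Rmin; destruct (Rle_dec u 0); lra.
Qed.

Lemma fluxdiff_zero_velocity (r : Z -> R) (i : Z) : fluxdiff (fun _ => 0) r i = 0.
Proof. unfold fluxdiff; rewrite !Aup_Rmax_Rmin, Rmax_right, Rmin_left by lra; ring. Qed.

Lemma fluxdiff_one_minus (v r : Z -> R) (i : Z) :
  fluxdiff v (fun j => 1 - r j) i = (v (i + 1)%Z - v i) - fluxdiff v r i.
Proof.
  unfold fluxdiff, Aup; destruct (Rlt_dec 0 (v (i + 1)%Z)), (Rlt_dec 0 (v i)); ring.
Qed.

(* Expanded, the update is a combination of r_(i-1), r_i, r_(i+1) whose coefficients are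
   nonnegative; the CFL bound is what keeps the weight of r_i nonnegative. *)
Lemma upwind_step_nonneg (l MV MW : R) (v w r : Z -> R) (i : Z) :
  0 <= l -> (forall j, Rabs (v j) <= MV) -> (forall j, Rabs (w j) <= MW) ->
  2 * l * (MV + MW) <= 1 -> (forall j, 0 <= r j) ->
  0 <= r i - l * fluxdiff v r i - l * fluxdiff w r i.
Proof.
  intros Hl Hv Hw Hcfl Hr; unfold fluxdiff; rewrite !Aup_Rmax_Rmin.
  destruct (Rmax_Rmin_0_bounds _ _ (Hv i)) as [Hvp0 Hvm0].
  destruct (Rmax_Rmin_0_bounds _ _ (Hv (i + 1)%Z)) as [Hvp1 Hvm1].
  destruct (Rmax_Rmin_0_bounds _ _ (Hw i)) as [Hwp0 Hwm0].
  destruct (Rmax_Rmin_0_bounds _ _ (Hw (i + 1)%Z)) as [Hwp1 Hwm1].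
  pose proof (Hr (i - 1)%Z); pose proof (Hr i); pose proof (Hr (i + 1)%Z).
  set (outflow := Rmax (v (i + 1)%Z) 0 - Rmin (v i) 0 + Rmax (w (i + 1)%Z) 0 - Rmin (w i) 0).
  assert (Hout : l * outflow <= 1).
  { assert (l * outflow <= l * (2 * (MV + MW))) by (apply Rmult_le_compat_l; unfold outflow; lra).
    lra. }
  match goal with |- 0 <= ?e => replace e with
    (r i * (1 - l * outflow)
     + l * Rmax (v i) 0 * r (i - 1)%Z + l * - Rmin (v (i + 1)%Z) 0 * r (i + 1)%Z
     + l * Rmax (w i) 0 * r (i - 1)%Z + l * - Rmin (w (i + 1)%Z) 0 * r (i + 1)%Z)
    by (unfold outflow; ring) end.
  repeat apply Rplus_le_le_0_compat; repeat apply Rmult_le_pos; lra.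
Qed.

Lemma poisson_fluxdiff (dx F : R) (p : Z -> R) (i : Z) :
  0 < dx -> (p (i + 1)%Z - 2 * p i + p (i - 1)%Z) / dx ^ 2 = 1 / dx * F ->
  F = - (wcorr dx p (i + 1) - wcorr dx p i).
Proof.
  intros Hdx Hpoi.
  replace F with (dx * (1 / dx * F)) by (field; lra).
  rewrite <- Hpoi; unfold wcorr; replace (i + 1 - 1)%Z with i by lia; field; lra.
Qed.

Lemma cfl_ratio (dt dx M : R) : 0 < dx -> 2 * dt * M < dx -> 2 * (dt / dx) * M <= 1.
Proof.
  intros Hdx Hcfl; apply Rmult_le_reg_r with dx; [lra|].
  replace (2 * (dt / dx) * M * dx) with (2 * dt * M) by (field; lra); lra.
Qed.

Lemma periodic_add_mul (N : nat) (f : Z -> R) :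
  periodic N f -> forall k i, f (i + k * Z.of_nat N)%Z = f i.
Proof.
  intros Hf k; induction k using Z.peano_ind; intro i.
  - now rewrite Z.add_0_r.
  - rewrite <- (IHk i), <- (Hf (i + k * Z.of_nat N)%Z); f_equal; lia.
  - rewrite <- (IHk i), <- (Hf (i + Z.pred k * Z.of_nat N)%Z); f_equal; lia.
Qed.

Lemma periodic_mod (N : nat) (f : Z -> R) :
  (0 < N)%nat -> periodic N f -> forall i, f i = f (i mod Z.of_nat N)%Z.
Proof.
  intros HN Hf i.
  rewrite <- (periodic_add_mul N f Hf (i / Z.of_nat N) (i mod Z.of_nat N)%Z).
  f_equal; pose proof (Z.div_mod i (Z.of_nat N)); lia.
Qed.

Lemma periodic_wcorr (N : nat) (dx : R) (p : Z -> R) : periodic N p -> periodic N (wcorr dx p).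
Proof.
  intros Hp i; unfold wcorr.
  replace (i + Z.of_nat N - 1)%Z with (i - 1 + Z.of_nat N)%Z by lia; now rewrite !Hp.
Qed.

Lemma le_fold_Rmax (x : R) (l : list R) : In x l -> x <= fold_right Rmax 0 l.
Proof.
  induction l as [|y l IHl]; simpl; [tauto|]; intros [->|Hx].
  - apply Rmax_l.
  - eapply Rle_trans; [apply IHl, Hx | apply Rmax_r].
Qed.

Lemma fold_Rmax_nonneg (l : list R) : 0 <= fold_right Rmax 0 l.
Proof.
  induction l as [|y l IHl]; simpl; [lra|].
  eapply Rle_trans; [apply IHl | apply Rmax_r].
Qed.

Lemma maxabs_nonneg (N : nat) (f : Z -> R) : 0 <= maxabs N f.
Proof. apply fold_Rmax_nonneg. Qed.

Lemma Rabs_le_maxabs (N : nat) (f : Z -> R) :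
  (0 < N)%nat -> periodic N f -> forall i, Rabs (f i) <= maxabs N f.
Proof.
  intros HN Hf i; rewrite (periodic_mod N f HN Hf); unfold maxabs.
  apply le_fold_Rmax.
  pose proof (Z.mod_pos_bound i (Z.of_nat N)).
  replace (i mod Z.of_nat N)%Z with (Z.of_nat (Z.to_nat (i mod Z.of_nat N))) by lia.
  apply (in_map (fun k => Rabs (f (Z.of_nat k)))), in_seq; lia.
Qed.

Theorem mainTheorem5
  (N : nat) (dx dt : R)
  (rho U p : nat -> Z -> R)
  (HN : (0 < N)%nat) (Hdx : 0 < dx) (Hdt : 0 < dt)
  (Hrho0per : periodic N (rho 0%nat))
  (HUper : forall n, periodic N (U n))
  (Hpper : forall n, periodic N (p n))
  (Hpoisson : forall (n : nat) (i : Z),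
      (p n (i + 1)%Z - 2 * p n i + p n (i - 1)%Z) / (dx ^ 2)
      = (1 / dx) * fluxdiff (U n) (rho n) i)
  (Hupdate : forall (n : nat) (i : Z),
      rho (S n) i = rho n i - dt / dx * fluxdiff (U n) (rho n) i
                            - dt / dx * fluxdiff (wcorr dx (p n)) (rho n) i)
  (HCFL : forall n : nat,
      2 * dt * (maxabs N (U n) + maxabs N (wcorr dx (p n))) < dx)
  (Hinit : forall i : Z, (0 <= i < Z.of_nat N)%Z -> 0 <= rho 0%nat i <= 1) :
  forall (n : nat) (i : Z), (0 <= i < Z.of_nat N)%Z -> 0 <= rho n i <= 1.
Proof.
  enough (Hall : forall n i, 0 <= rho n i <= 1) by (intros n i _; apply Hall).
  induction n as [|n IHn]; intro i.
  { rewrite (periodic_mod N _ HN Hrho0per); apply Hinit, Z.mod_pos_bound; lia. }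
  set (w := wcorr dx (p n)); set (l := dt / dx).
  assert (Hl : 0 <= l) by (apply Rlt_le, Rdiv_lt_0_compat; lra).
  pose proof (Rabs_le_maxabs N (U n) HN (HUper n)) as HUbound.
  pose proof (Rabs_le_maxabs N w HN (periodic_wcorr N dx _ (Hpper n))) as Hwbound.
  pose proof (maxabs_nonneg N (U n)) as HMU.
  assert (Hcfl : 2 * l * (maxabs N (U n) + maxabs N w) <= 1) by (apply cfl_ratio; [lra | apply HCFL]).
  assert (Hcomplement : 1 - rho (S n) i = (1 - rho n i) - l * fluxdiff w (fun j => 1 - rho n j) i).
  { rewrite Hupdate, fluxdiff_one_minus, (poisson_fluxdiff dx _ (p n) i Hdx (Hpoisson n i)).
    fold w l; ring. }
  split.
  - rewrite Hupdate; fold w l.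
    apply upwind_step_nonneg with (maxabs N (U n)) (maxabs N w); auto; apply IHn.
  - enough (0 <= 1 - rho (S n) i) by lra.
    assert (Hstep : 0 <= (1 - rho n i) - l * fluxdiff (fun _ => 0) (fun j => 1 - rho n j) i
                                      - l * fluxdiff w (fun j => 1 - rho n j) i).
    { apply (upwind_step_nonneg l 0 (maxabs N w) (fun _ => 0) w (fun j => 1 - rho n j) i); auto.
      - intros _; rewrite Rabs_R0; lra.
      - pose proof (Rmult_le_pos _ _ Hl HMU); lra.
      - intro j; pose proof (IHn j); lra. }
    rewrite fluxdiff_zero_velocity in Hstep; lra.
Qed.
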